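(* Let $M,N,K\ge 1$ be integers, $\mathcal K=\{1,\dots,K\}$, $\mathbf G\in\mathbb C^{N\times M}$, $\mathbf h_1,\dots,\mathbf h_K\in\mathbb C^{M}$, $P_0>0$, and for each $k\in\mathcal K$ let $\Gamma_k>0$ and $\sigma_k^2>0$. Write $\mathbf H_k=\mathbf h_k\mathbf h_k^H$. For a positive semidefinite $\mathbf R\in\mathbb C^{M\times M}$ let $f(\mathbf R)=\mathrm{tr}\big((\mathbf G\mathbf R\mathbf G^H)^{-1}\big)$ when $\mathbf G\mathbf R\mathbf G^H$ is invertible, and $f(\mathbf R)=+\infty$ otherwise. Consider the problems: (P1.1): minimize $f\big(\sum_{k\in\mathcal K}\mathbf w_k\mathbf w_k^H+\mathbf R_0\big)$ over $\mathbf w_1,\dots,\mathbf w_K\in\mathbb C^M$ and Hermitian $\mathbf R_0\in\mathbb C^{M\times M}$, subject to $\frac{|\mathbf h_k^H\mathbf w_k|^2}{\sum_{i\in\mathcal K,i\ne k}|\mathbf h_k^H\mathbf w_i|^2+\mathbf h_k^H\mathbf R_0\mathbf h_k+\sigma_k^2}\ge\Gamma_k$ for all $k\in\mathcal K$, $\sum_{k\in\mathcal K}\|\mathbf w_k\|^2+\mathrm{tr}(\mathbf R_0)\le P_0$, and $\mathbf R_0\succeq\mathbf 0$; (P1.2): minimize $f\big(\sum_{k\in\mathcal K}\mathbf W_k+\mathbf R_0\big)$ over Hermitian $\mathbf W_1,\dots,\mathbf W_K,\mathbf R_0\in\mathbb C^{M\times M}$, subject to $\frac{1}{\Gamma_k}\mathrm{tr}(\mathbf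 H_k\mathbf W_k)-\sum_{i\in\mathcal K,i\ne k}\mathrm{tr}(\mathbf H_k\mathbf W_i)-\mathrm{tr}(\mathbf H_k\mathbf R_0)\ge\sigma_k^2$ for all $k\in\mathcal K$, $\sum_{k\in\mathcal K}\mathrm{tr}(\mathbf W_k)+\mathrm{tr}(\mathbf R_0)\le P_0$, $\mathbf R_0\succeq\mathbf 0$, $\mathbf W_k\succeq\mathbf 0$ and $\mathrm{rank}(\mathbf W_k)\le 1$ for all $k\in\mathcal K$; (SDR1.2): the same as (P1.2) but without the constraints $\mathrm{rank}(\mathbf W_k)\le1$. Then (P1.1), (P1.2) and (SDR1.2) have the same optimal value. Moreover, if $\{\tilde{\mathbf W}_k\}_{k\in\mathcal K},\tilde{\mathbf R}_0$ is an optimal solution of (SDR1.2), then $\mathbf w_k^\star=(\mathbf h_k^H\tilde{\mathbf W}_k\mathbf h_k)^{-1/2}\tilde{\mathbf W}_k\mathbf h_k$ for $k\in\mathcal K$ and $\mathbf R_0^\star=\tilde{\mathbf R}_0+\sum_{k\in\mathcal K}\tilde{\mathbf W}_k-\sum_{k\in\mathcal K}\mathbf w_k^\star(\mathbf w_k^\star)^H$ form an optimal solution of (P1.1).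
   Context: This is the transmit beamforming subproblem of an IRS-enabled integrated sensing and communication system with a fixed IRS reflection vector: $\mathbf h_k$ is the combined channel from the base station ($M$ antennas) to user $k$, $\mathbf w_k$ the information beamformer for user $k$, $\mathbf R_0$ the covariance matrix of the dedicated sensing signal, $\mathbf G$ the base-station-to-IRS channel, $\Gamma_k$ the SINR threshold, $\sigma_k^2$ the noise variance, and $P_0$ the power budget. The objective is (up to a positive constant) the Cramér-Rao bound for estimating the target response matrix. Here users cannot cancel sensing-signal interference, hence the term $\mathbf h_k^H\mathbf R_0\mathbf h_k$ in the SINR. *)

From HB Require Import structures.
From mathcomp Require Import all_boot all_order all_algebra.
From mathcomp Require Import all_classical all_reals ereal.
From mathcomp Require Import complex.
Import Order.TTheory GRing.Theory Num.Theory.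
Set Implicit Arguments. Unset Strict Implicit. Unset Printing Implicit Defensive.
Local Open Scope ring_scope.
Local Open Scope complex_scope.

Section Defs.
Variable R : realType.
Local Notation C := R[i].

Definition ctrans (m n : nat) (A : 'M[C]_(m, n)) : 'M[C]_(n, m) :=
  (map_mx Num.conj A)^T.

Definition hermitian (n : nat) (A : 'M[C]_n) : Prop := ctrans A = A.

Definition psd (n : nat) (A : 'M[C]_n) : Prop :=
  hermitian A /\ forall x : 'cV[C]_n, 0 <= (ctrans x *m A *m x) 0 0.

Definition qf (n : nat) (x : 'cV[C]_n) (A : 'M[C]_n) (y : 'cV[C]_n) : C :=
  (ctrans x *m A *m y) 0 0.

Definition ip (n : nat) (x y : 'cV[C]_n) : C := (ctrans x *m y) 0 0.

Definition sqnorm (n : nat) (x : 'cV[C]_n) : C := \sum_i `|x i 0| ^+ 2.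

(* f(R) = tr((G R G^H)^{-1}) if G R G^H invertible, +oo otherwise
   (the trace is real for PSD R; we take its real part) *)
Definition crb (N M : nat) (G : 'M[C]_(N, M)) (Rm : 'M[C]_M) : \bar R :=
  let A := G *m Rm *m ctrans G in
  if A \in unitmx then ((complex.Re (\tr (invmx A)))%:E)%E else (+oo)%E.

Variables (M N K : nat) (G : 'M[C]_(N, M)) (h : 'I_K -> 'cV[C]_M)
  (P0 : R) (Gamma sigma2 : 'I_K -> R).

Definition feasible11 (x : ('I_K -> 'cV[C]_M) * 'M[C]_M) : Prop :=
  let w := x.1 in let R0 := x.2 in
  [/\ forall k : 'I_K,
        `|ip (h k) (w k)| ^+ 2 /
          (\sum_(i < K | i != k) `|ip (h k) (w i)| ^+ 2 + qf (h k) R0 (h k)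
             + (sigma2 k)%:C) >= (Gamma k)%:C,
      \sum_k sqnorm (w k) + \tr R0 <= P0%:C,
      hermitian R0 & psd R0].

Definition obj11 (x : ('I_K -> 'cV[C]_M) * 'M[C]_M) : \bar R :=
  crb G (\sum_k (x.1 k *m ctrans (x.1 k)) + x.2).

Definition Hm (k : 'I_K) : 'M[C]_M := h k *m ctrans (h k).

Definition feasibleSDR (x : ('I_K -> 'M[C]_M) * 'M[C]_M) : Prop :=
  let W := x.1 in let R0 := x.2 in
  [/\ forall k : 'I_K,
        ((Gamma k)^-1)%:C * \tr (Hm k *m W k)
          - \sum_(i < K | i != k) \tr (Hm k *m W i) - \tr (Hm k *m R0)
          >= (sigma2 k)%:C,
      \sum_k \tr (W k) + \tr R0 <= P0%:C,
      hermitian R0 /\ psd R0 &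
      forall k, hermitian (W k) /\ psd (W k)].

Definition feasible12 (x : ('I_K -> 'M[C]_M) * 'M[C]_M) : Prop :=
  feasibleSDR x /\ forall k, (\rank (x.1 k) <= 1)%N.

Definition obj12 (x : ('I_K -> 'M[C]_M) * 'M[C]_M) : \bar R :=
  crb G (\sum_k x.1 k + x.2).

(* optimal values (infimum in the extended reals; +oo if infeasible) *)
Definition val11 : \bar R := ereal_inf [set obj11 x | x in feasible11].
Definition val12 : \bar R := ereal_inf [set obj12 x | x in feasible12].
Definition valSDR : \bar R := ereal_inf [set obj12 x | x in feasibleSDR].

Definition wstar (W : 'I_K -> 'M[C]_M) (k : 'I_K) : 'cV[C]_M :=
  (sqrtC (qf (h k) (W k) (h k)))^-1 *: (W k *m h k).

Definition R0star (W : 'I_K -> 'M[C]_M) (R0 : 'M[C]_M) : 'M[C]_M :=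
  R0 + \sum_k W k - \sum_k (wstar W k *m ctrans (wstar W k)).

End Defs.

From Pilot Require Import Defs.
From HB Require Import structures.
From mathcomp Require Import all_boot all_order all_algebra.
From mathcomp Require Import all_classical all_reals ereal.
From mathcomp Require Import complex.
From mathcomp Require Import ring.
Import Order.TTheory GRing.Theory Num.Theory.
Set Implicit Arguments. Unset Strict Implicit. Unset Printing Implicit Defensive.
Local Open Scope ring_scope.
Local Open Scope complex_scope.

(* The map w_k |-> w_k w_k^H sends feasible points of (P1.1) to feasible
   points of (P1.2) with the same objective (multiplying the SINR constraint
   by its positive denominator makes it linear in the W_k), and (P1.2) is a
   restriction of (SDR1.2); so val(SDR1.2) <= val(P1.2) <= val(P1.1).
   Conversely, for an (SDR1.2)-feasible point the vector
   w_k = W_k h_k / sqrt(h_k^H W_k h_k) satisfies |h_k^H w_k|^2 = h_k^H W_k h_k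
   and, by Cauchy-Schwarz for the form of W_k, W_k - w_k w_k^H >= 0.  Moving
   every W_k - w_k w_k^H into the sensing covariance therefore keeps the total
   covariance, the power, the useful signal and (since users do not cancel
   the sensing signal) the interference-plus-noise of every user unchanged:
   this gives a (P1.1)-feasible point with the same objective, whence
   val(P1.1) <= val(SDR1.2). *)

Section HermitianForms.
Variables (R : realType) (n : nat).
Local Notation C := R[i].

Lemma ctransE m p (A : 'M[C]_(m, p)) i j : ctrans A i j = Num.conj (A j i).
Proof. by rewrite !mxE. Qed.

Lemma ctransM m p q (A : 'M[C]_(m, p)) (B : 'M[C]_(p, q)) :
  ctrans (A *m B) = ctrans B *m ctrans A.
Proof. by rewrite /ctrans map_mxM trmx_mul. Qed.

Lemma ctransK m p (A : 'M[C]_(m, p)) : ctrans (ctrans A) = A.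
Proof. by apply/matrixP => i j; rewrite !ctransE conjCK. Qed.

Lemma ctransD m p (A B : 'M[C]_(m, p)) : ctrans (A + B) = ctrans A + ctrans B.
Proof. by apply/matrixP => i j; rewrite !mxE rmorphD. Qed.

Lemma ctransB m p (A B : 'M[C]_(m, p)) : ctrans (A - B) = ctrans A - ctrans B.
Proof. by apply/matrixP => i j; rewrite !mxE rmorphB. Qed.

Lemma ctransZ m p (c : C) (A : 'M[C]_(m, p)) :
  ctrans (c *: A) = Num.conj c *: ctrans A.
Proof. by apply/matrixP => i j; rewrite !mxE rmorphM. Qed.

Lemma ctrans0 m p : ctrans (0 : 'M[C]_(m, p)) = 0.
Proof. by apply/matrixP => i j; rewrite !mxE rmorph0. Qed.

Implicit Types (x y v : 'cV[C]_n) (A B W : 'M[C]_n).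

Lemma conj_qf x A y : Num.conj (qf x A y) = qf y (ctrans A) x.
Proof. by rewrite /qf -ctransE !ctransM ctransK mulmxA. Qed.

Lemma conj_ip x y : Num.conj (ip x y) = ip y x.
Proof. by rewrite /ip -ctransE ctransM ctransK. Qed.

Lemma qfD x A B y : qf x (A + B) y = qf x A y + qf x B y.
Proof. by rewrite /qf mulmxDr mulmxDl mxE. Qed.

Lemma qfB x A B y : qf x (A - B) y = qf x A y - qf x B y.
Proof. by rewrite /qf mulmxBr mulmxBl !mxE. Qed.

Lemma qf_sum x y (I : finType) (P : pred I) (F : I -> 'M[C]_n) :
  qf x (\sum_(i | P i) F i) y = \sum_(i | P i) qf x (F i) y.
Proof. by rewrite /qf mulmx_sumr mulmx_suml summxE. Qed.

Lemma qfBl x v A y : qf (x - v) A y = qf x A y - qf v A y.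
Proof. by rewrite /qf ctransB !mulmxBl !mxE. Qed.

Lemma qfBr x A y v : qf x A (y - v) = qf x A y - qf x A v.
Proof. by rewrite /qf !mulmxBr !mxE. Qed.

Lemma qfZl c x A y : qf (c *: x) A y = Num.conj c * qf x A y.
Proof. by rewrite /qf ctransZ -!scalemxAl mxE. Qed.

Lemma qfZr c x A y : qf x A (c *: y) = c * qf x A y.
Proof. by rewrite /qf -!scalemxAr mxE. Qed.

Lemma ipZr c x y : ip x (c *: y) = c * ip x y.
Proof. by rewrite /ip -scalemxAr mxE. Qed.

Lemma ip_mulmx x A y : ip x (A *m y) = qf x A y.
Proof. by rewrite /ip /qf mulmxA. Qed.

Lemma qf_outer x y : qf x (y *m ctrans y) x = `|ip x y| ^+ 2.
Proof.
rewrite normCK conj_ip /qf /ip !mulmxA -(mulmxA (ctrans x *m y)).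
by rewrite [LHS]mxE big_ord1.
Qed.

Lemma tr_outer_mulmx v A : \tr (v *m ctrans v *m A) = qf v A v.
Proof. by rewrite -mulmxA mxtrace_mulC /mxtrace big_ord1. Qed.

Lemma tr_outer v : \tr (v *m ctrans v) = sqnorm v.
Proof.
rewrite mxtrace_mulC /mxtrace big_ord1 mxE /sqnorm.
by apply: eq_bigr => j _; rewrite ctransE normCKC.
Qed.

Lemma psd_qf_ge0 {A} : psd A -> forall x, 0 <= qf x A x.
Proof. by case. Qed.

Lemma psd_outer v : psd (v *m ctrans v).
Proof.
split=> [|x]; first by rewrite /Defs.hermitian ctransM ctransK.
by rewrite -[X in 0 <= X]/(qf x _ x) qf_outer exprn_ge0.
Qed.

Lemma psd0 : psd (0 : 'M[C]_n).
Proof. by split=> [|x]; rewrite ?/Defs.hermitian ?ctrans0 // mulmx0 mul0mx mxE. Qed.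

Lemma psdD A B : psd A -> psd B -> psd (A + B).
Proof.
move=> pA pB; split=> [|x]; first by rewrite /Defs.hermitian ctransD pA.1 pB.1.
by rewrite -[X in 0 <= X]/(qf x _ x) qfD addr_ge0 // psd_qf_ge0.
Qed.

Lemma psd_sum (I : finType) (F : I -> 'M[C]_n) :
  (forall i, psd (F i)) -> psd (\sum_i F i).
Proof. by move=> pF; apply: big_ind => //; [exact: psd0 | exact: psdD]. Qed.

(* Expand the nonnegative form at x - (qf y A x / qf y A y) y. *)
Lemma psd_cauchy_schwarz A x y : psd A -> 0 < qf y A y ->
  `|qf x A y| ^+ 2 / qf y A y <= qf x A x.
Proof.
move=> pA ay_gt0; set a := qf y A y; set c := qf y A x; set d := qf x A y.
have conj_c : Num.conj c = d by rewrite /c conj_qf pA.1.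
have conj_a : Num.conj a = a by rewrite geC0_conj // ltW.
have conj_ca : Num.conj (c / a) = d / a.
  by rewrite -conj_c -{2}conj_a; exact: fmorph_div.
have := psd_qf_ge0 pA (x - (c / a) *: y).
rewrite qfBl qfZl !qfBr !qfZr conj_ca -/a -/c -/d normCK conj_qf pA.1 -/c.
have a_neq0 : a != 0 by rewrite gt_eqF.
by rewrite (_ : _ - _ = qf x A x - d * c / a) ?subr_ge0 //; field.
Qed.

Definition rank1_factor W v : 'cV[C]_n := (sqrtC (qf v W v))^-1 *: (W *m v).

Lemma sqr_norm_ip_rank1_factor W v x : 0 < qf v W v ->
  `|ip x (rank1_factor W v)| ^+ 2 = `|qf x W v| ^+ 2 / qf v W v.
Proof.
move=> a_gt0; rewrite ipZr ip_mulmx normrM exprMn normfV.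
by rewrite (@ger0_norm _ (sqrtC _)) ?sqrtC_ge0 ?ltW // exprVn sqrtCK mulrC.
Qed.

Lemma sqr_norm_ip_rank1_factor_self W v : 0 < qf v W v ->
  `|ip v (rank1_factor W v)| ^+ 2 = qf v W v.
Proof.
move=> a_gt0; rewrite sqr_norm_ip_rank1_factor // ger0_norm ?ltW //.
by rewrite expr2 mulfK // gt_eqF.
Qed.

Lemma psd_sub_rank1_factor W v : psd W -> 0 < qf v W v ->
  psd (W - rank1_factor W v *m ctrans (rank1_factor W v)).
Proof.
move=> pW a_gt0; split=> [|x].
  by rewrite /Defs.hermitian ctransB pW.1 (psd_outer _).1.
rewrite -[X in 0 <= X]/(qf x _ x) qfB qf_outer subr_ge0.
by rewrite sqr_norm_ip_rank1_factor // psd_cauchy_schwarz.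
Qed.

End HermitianForms.

Lemma realC_gt0 (R : realType) (r : R) : (0 < r%:C :> R[i]) = (0 < r).
Proof. exact: (ltcR 0 r). Qed.

Lemma sinr_geE (R : realType) (g : R) (a b s : R[i]) : 0 < g -> 0 < b + s ->
  (g%:C <= a / (b + s)) = (s <= (g^-1)%:C * a - b).
Proof.
move=> g_gt0 bs_gt0; have gC_gt0 : 0 < g%:C :> R[i] by rewrite realC_gt0.
by rewrite ler_pdivlMr // -ler_pdivlMl // fmorphV lerBrDl.
Qed.

Section Relaxation.
Variables (R : realType) (M N K : nat) (G : 'M[R[i]]_(N, M)).
Variables (h : 'I_K -> 'cV[R[i]]_M) (P0 : R) (Gamma sigma2 : 'I_K -> R).
Hypotheses (Gamma_gt0 : forall k, 0 < Gamma k) (sigma2_gt0 : forall k, 0 < sigma2 k).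

Lemma tr_Hm_mulmx k A : \tr (Hm h k *m A) = qf (h k) A (h k).
Proof. exact: tr_outer_mulmx. Qed.

Lemma sdr_sinrE (W : 'I_K -> 'M[R[i]]_M) R0 k :
  ((Gamma k)^-1)%:C * \tr (Hm h k *m W k)
    - \sum_(i < K | i != k) \tr (Hm h k *m W i) - \tr (Hm h k *m R0)
  = ((Gamma k)^-1)%:C * qf (h k) (W k) (h k)
    - (\sum_(i < K | i != k) qf (h k) (W i) (h k) + qf (h k) R0 (h k)).
Proof.
rewrite opprD addrA !tr_Hm_mulmx.
by under eq_bigr => i _ do rewrite tr_Hm_mulmx.
Qed.

Definition outer_beams (x : ('I_K -> 'cV[R[i]]_M) * 'M[R[i]]_M) :=
  (fun k => x.1 k *m ctrans (x.1 k), x.2).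

Lemma obj12_outer_beams x : obj12 G (outer_beams x) = obj11 G x.
Proof. by []. Qed.

Lemma feasible12_outer_beams x :
  feasible11 h P0 Gamma sigma2 x -> feasible12 h P0 Gamma sigma2 (outer_beams x).
Proof.
case: x => w R0 [/= sinr power hR0 pR0]; rewrite /outer_beams; split=> /=.
  split=> [k | | // | k] /=; last by split; [exact: (psd_outer _).1 | exact: psd_outer].
  - rewrite sdr_sinrE -sinr_geE //; last first.
      rewrite ltr_wpDl ?realC_gt0 ?sigma2_gt0 // addr_ge0 ?psd_qf_ge0 //.
      by apply: sumr_ge0 => i _; exact: (psd_qf_ge0 (psd_outer (w i))).
    rewrite qf_outer.
    by under eq_bigr => i _ do rewrite qf_outer.
  - by under eq_bigr => k _ do rewrite tr_outer.
by move=> k; apply: mulmx_max_rank.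
Qed.

Definition beams_of_sdr (y : ('I_K -> 'M[R[i]]_M) * 'M[R[i]]_M) :=
  (wstar h y.1, R0star h y.1 y.2).

Lemma wstarE W k : wstar h W k = rank1_factor (W k) (h k).
Proof. by []. Qed.

Lemma sum_outer_wstar_R0star W R0 :
  \sum_k (wstar h W k *m ctrans (wstar h W k)) + R0star h W R0 = \sum_k W k + R0.
Proof. by rewrite /R0star addrC subrK addrC. Qed.

Lemma obj11_beams_of_sdr y : obj11 G (beams_of_sdr y) = obj12 G y.
Proof. by rewrite /obj11 sum_outer_wstar_R0star. Qed.

Section SdrPoint.
Variables (W : 'I_K -> 'M[R[i]]_M) (R0 : 'M[R[i]]_M).
Hypothesis feasW : feasibleSDR h P0 Gamma sigma2 (W, R0).

Lemma interference_ge0 k :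
  0 <= \sum_(i < K | i != k) qf (h k) (W i) (h k) + qf (h k) R0 (h k).
Proof.
have [_ _ [_ pR0] pW] := feasW.
rewrite addr_ge0 ?(psd_qf_ge0 pR0) // sumr_ge0 // => i _.
exact: (psd_qf_ge0 (pW i).2).
Qed.

Lemma sdr_signal_gt0 k : 0 < qf (h k) (W k) (h k).
Proof.
have [sinr _ _ _] := feasW.
have noise_gt0 : 0 < (sigma2 k)%:C :> R[i] by rewrite realC_gt0.
have := sinr k; rewrite sdr_sinrE lerBrDl.
move=> /(lt_le_trans (ltr_wpDl (interference_ge0 k) noise_gt0)).
by rewrite pmulr_rgt0 // realC_gt0 invr_gt0.
Qed.

Lemma R0star_sum_sub : R0star h W R0 =
  R0 + \sum_k (W k - wstar h W k *m ctrans (wstar h W k)).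
Proof. by rewrite /R0star sumrB addrA. Qed.

Lemma wstar_signal k : `|ip (h k) (wstar h W k)| ^+ 2 = qf (h k) (W k) (h k).
Proof. by rewrite wstarE; exact: (sqr_norm_ip_rank1_factor_self (sdr_signal_gt0 k)). Qed.

Lemma interference_R0star k :
  \sum_(i < K | i != k) `|ip (h k) (wstar h W i)| ^+ 2 + qf (h k) (R0star h W R0) (h k)
  = \sum_(i < K | i != k) qf (h k) (W i) (h k) + qf (h k) R0 (h k).
Proof.
rewrite /R0star qfB qfD !qf_sum.
under [X in _ - X]eq_bigr => i _ do rewrite qf_outer.
rewrite [\sum_i qf _ (W _) _](bigD1 k) // [X in _ - X](bigD1 k) //=.
(* Generalized away: matching [wstar_signal] inside this sum would unfold the
   matrix products in [wstar]. *)
move: (\sum_(i < K | i != k) `|ip (h k) (wstar h W i)| ^+ 2) => others.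
by rewrite wstar_signal; ring.
Qed.

Lemma psd_R0star : psd (R0star h W R0).
Proof.
have [_ _ [_ pR0] pW] := feasW.
rewrite R0star_sum_sub; apply: psdD => //; apply: psd_sum => k.
by rewrite wstarE; exact: (psd_sub_rank1_factor (pW k).2 (sdr_signal_gt0 k)).
Qed.

Lemma feasible11_beams_of_sdr : feasible11 h P0 Gamma sigma2 (beams_of_sdr (W, R0)).
Proof.
have [sinr power _ _] := feasW.
split=> /=; [move=> k | | exact: psd_R0star.1 | exact: psd_R0star].
- rewrite interference_R0star wstar_signal sinr_geE -?sdr_sinrE //.
  by rewrite ltr_wpDl ?realC_gt0 ?sigma2_gt0 ?interference_ge0.
- under eq_bigr => k _ do rewrite -tr_outer.
  by rewrite -raddf_sum -mxtraceD sum_outer_wstar_R0star mxtraceD raddf_sum.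
Qed.

End SdrPoint.
End Relaxation.

Theorem proposition1 (R : realType) (M N K : nat)
  (G : 'M[R[i]]_(N, M)) (h : 'I_K -> 'cV[R[i]]_M)
  (P0 : R) (Gamma sigma2 : 'I_K -> R) :
  (0 < M)%N -> (0 < N)%N -> (0 < K)%N ->
  0 < P0 -> (forall k, 0 < Gamma k) -> (forall k, 0 < sigma2 k) ->
  val11 G h P0 Gamma sigma2 = val12 G h P0 Gamma sigma2 /\
  val12 G h P0 Gamma sigma2 = valSDR G h P0 Gamma sigma2 /\
  (forall (Wt : 'I_K -> 'M[R[i]]_M) (Rt : 'M[R[i]]_M),
     feasibleSDR h P0 Gamma sigma2 (Wt, Rt) ->
     obj12 G (Wt, Rt) = valSDR G h P0 Gamma sigma2 ->
     feasible11 h P0 Gamma sigma2 (wstar h Wt, R0star h Wt Rt) /\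
     obj11 G (wstar h Wt, R0star h Wt Rt) = val11 G h P0 Gamma sigma2).
Proof.
move=> _ _ _ _ Gamma_gt0 sigma2_gt0.
have le12_11 : (val12 G h P0 Gamma sigma2 <= val11 G h P0 Gamma sigma2)%E.
  apply: ereal_inf_le_tmp => _ [x feas <-].
  exists (outer_beams x); last exact: obj12_outer_beams.
  exact: feasible12_outer_beams.
have leSDR_12 : (valSDR G h P0 Gamma sigma2 <= val12 G h P0 Gamma sigma2)%E.
  by apply: ereal_inf_le_tmp => _ [x [feas _] <-]; exists x.
have le11_SDR : (val11 G h P0 Gamma sigma2 <= valSDR G h P0 Gamma sigma2)%E.
  apply: ereal_inf_le_tmp => _ [[W R0] feas <-].
  exists (beams_of_sdr h (W, R0)); last exact: obj11_beams_of_sdr.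
  exact: feasible11_beams_of_sdr.
have e11 : val11 G h P0 Gamma sigma2 = valSDR G h P0 Gamma sigma2.
  by apply/eqP; rewrite eq_le le11_SDR (le_trans leSDR_12 le12_11).
have e12 : val12 G h P0 Gamma sigma2 = valSDR G h P0 Gamma sigma2.
  by apply/eqP; rewrite eq_le leSDR_12 -e11 le12_11.
split; [by rewrite e11 e12 | split=> // W R0 feas opt].
split; first exact: feasible11_beams_of_sdr.
by rewrite e11 -opt -(obj11_beams_of_sdr G h (W, R0)).
Qed.
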